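(* Let $\phi$ be a Pogorelov solution and $\phi^*(x)=\sup_{y\in B(0,1)}\{x\cdot y-\phi(y)\}$ its Legendre–Fenchel dual. Let $x\in\mathbb{R}^2$ be any point outside the convex hull of $\{d_1,\dots,d_K\}$. Then $\partial\phi^*(x)\subset\partial B(0,1)$.
   Context: Let $K\ge 1$, $d_1,\dots,d_K\in\mathbb{R}^2$, $\alpha_1,\dots,\alpha_K>0$ with $\sum_k\alpha_k=\pi=|B(0,1)|$, where $B(0,1)$ is the unit ball of $\mathbb{R}^2$, $\partial B(0,1)$ its boundary circle, and $|\cdot|$ is Lebesgue measure. Subgradient of a convex $u$: $\partial u(x)=\{p: u(z)\ge u(x)+p\cdot(z-x)\ \forall z\in\mathbb{R}^2\}$. A Pogorelov solution is a function $\phi(y)=\max_{k}\{y\cdot d_k-v_k\}$ on $B(0,1)$ (extended by $+\infty$ outside $B(0,1)$), for some reals $v_1,\dots,v_K$, such that $|C_k|=\alpha_k$ for every $k$, where $C_k=\{y\in B(0,1):\phi$ is differentiable at $y$ and $\nabla\phi(y)=d_k\}$. *)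

From HB Require Import structures.
From mathcomp Require Import all_boot all_order all_algebra.
From mathcomp Require Import all_classical all_reals all_analysis.
Set Implicit Arguments. Unset Strict Implicit. Unset Printing Implicit Defensive.
Import Order.TTheory GRing.Theory Num.Theory.
Import numFieldNormedType.Exports.
Local Open Scope classical_set_scope.
Local Open Scope ring_scope.

Section Defs.
Variable R : realType.

Definition dot2 (p q : R * R) : R := p.1 * q.1 + p.2 * q.2.

Definition unit_ball2 : set (R * R) := [set y | dot2 y y < 1].
Definition unit_circle2 : set (R * R) := [set y | dot2 y y = 1].

Definition leb2 := ((@lebesgue_measure R) \x (@lebesgue_measure R))%E.

Definition subgrad (u : R * R -> R) (x : R * R) : set (R * R) :=
  [set p | forall z, u x + dot2 p (z - x) <= u z].

Definition conv_hull (K : nat) (d : 'I_K -> R * R) : set (R * R) :=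
  [set x | exists lam : 'I_K -> R, (forall k, 0 <= lam k) /\
      \sum_(k < K) lam k = 1 /\ x = \sum_(k < K) lam k *: d k].

(* the max-affine function y |-> max_k (y.d_k - v_k) (the Pogorelov
   candidate, before restriction to B(0,1)) *)
Definition maxaff (K : nat) (d : 'I_K -> R * R) (v : 'I_K -> R) (y : R * R) : R :=
  sup [set dot2 y (d k) - v k | k in [set: 'I_K]].

(* C_k = {y in B(0,1) : phi differentiable at y, grad phi(y) = d_k}.
   Since B(0,1) is open, phi (= maxaff on B(0,1), +oo outside) is
   differentiable at y in B(0,1) iff maxaff is. *)
Definition grad_cell (K : nat) (d : 'I_K -> R * R) (v : 'I_K -> R) (k : 'I_K) :
  set (R * R) :=
  [set y | unit_ball2 y /\ differentiable (maxaff d v) y /\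
           forall h : R * R, 'd (maxaff d v) y h = dot2 (d k) h].

Definition pogorelov (K : nat) (d : 'I_K -> R * R) (alpha : 'I_K -> R)
  (v : 'I_K -> R) : Prop :=
  forall k, leb2 (grad_cell d v k) = (alpha k)%:E.

Definition lf_dual (K : nat) (d : 'I_K -> R * R) (v : 'I_K -> R) (x : R * R) : R :=
  sup [set dot2 x y - maxaff d v y | y in unit_ball2].

End Defs.

From HB Require Import structures.
From mathcomp Require Import all_boot all_order all_algebra.
From mathcomp Require Import all_classical all_reals all_analysis.
From mathcomp Require Import ring lra.
Set Implicit Arguments. Unset Strict Implicit. Unset Printing Implicit Defensive.
Import Order.TTheory GRing.Theory Num.Theory.
Import numFieldNormedType.Exports.
Local Open Scope classical_set_scope.
Local Open Scope ring_scope.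

(* For every lam in the simplex, Cauchy-Schwarz on B(0,1) gives
   phi*(z) <= |z - c| + sum_k lam_k v_k with c = sum_k lam_k d_k. For lam minimising the
   right-hand side at z = x this is an equality: testing phi* at
   y = (1 - t) (x - c) / |x - c| and using the first-order conditions at lam gives the
   reverse inequality as t -> 0. Hence a subgradient of phi* at x is a subgradient at x of
   the majorant z |-> |z - c|; as x lies outside the convex hull, x != c, and there every
   subgradient of the Euclidean norm is a unit vector. *)

Section EuclideanPlane.
Variable R : realType.
Implicit Types (a b c u x : R * R) (r s : R).

Definition norm2 u : R := Num.sqrt (dot2 u u).

Lemma dot2_ge0 u : 0 <= dot2 u u.
Proof. by rewrite /dot2 addr_ge0 // -expr2 sqr_ge0. Qed.

Lemma norm2_ge0 u : 0 <= norm2 u.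
Proof. exact: sqrtr_ge0. Qed.

Lemma sqr_norm2 u : norm2 u ^+ 2 = dot2 u u.
Proof. by rewrite sqr_sqrtr // dot2_ge0. Qed.

Lemma norm2_0 : norm2 0 = 0.
Proof. by rewrite /norm2 /dot2 /= mulr0 addr0 sqrtr0. Qed.

Lemma norm2_gt0 u : u != 0 -> 0 < norm2 u.
Proof.
move=> u0; rewrite sqrtr_gt0 lt_def dot2_ge0 andbT; apply: contra u0.
case: u => a b; rewrite /dot2 /= -!expr2 paddr_eq0 ?sqr_ge0 // !sqrf_eq0.
by case/andP=> /eqP-> /eqP->.
Qed.

Lemma norm2_le u r : 0 <= r -> dot2 u u <= r ^+ 2 -> norm2 u <= r.
Proof. by move=> r0 ur; rewrite -(ger0_norm r0) -sqrtr_sqr ler_sqrt // sqr_ge0. Qed.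

Lemma dot2_le_norm2M a b : dot2 a b <= norm2 a * norm2 b.
Proof.
rewrite -sqrtrM ?dot2_ge0 //; apply: le_trans (ler_norm _) _.
rewrite -sqrtr_sqr ler_sqrt ?mulr_ge0 ?dot2_ge0 // /dot2.
have := sqr_ge0 (a.1 * b.2 - a.2 * b.1); nra.
Qed.

Lemma norm2D_le a b : norm2 (a + b) <= norm2 a + norm2 b.
Proof.
apply: norm2_le; first by rewrite addr_ge0 ?norm2_ge0.
have := dot2_le_norm2M a b; have := sqr_norm2 a; have := sqr_norm2 b.
rewrite /dot2 /=; nra.
Qed.

Lemma norm2_AMGM u s : 2 * s * norm2 u <= dot2 u u + s ^+ 2.
Proof. rewrite -sqr_norm2; have := sqr_ge0 (norm2 u - s); nra. Qed.

Lemma subgrad_majorant (f h : R * R -> R) x :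
  (forall z, f z <= h z) -> f x = h x -> subgrad f x `<=` subgrad h x.
Proof. by move=> fh fx p hp z; rewrite -fx; apply: le_trans (hp z) (fh z). Qed.

Lemma subgrad_norm2_subr c r x :
  x != c -> subgrad (fun z => norm2 (z - c) + r) x `<=` @unit_circle2 R.
Proof.
move=> xc p hp; set s := norm2 (x - c).
have s0 : 0 < s by rewrite norm2_gt0 // subr_eq0.
have pw : s <= dot2 p (x - c).
  by have := hp c; rewrite subrr norm2_0 -/s /dot2 /=; lra.
have p_ge1 : 1 <= norm2 p.
  rewrite -(ler_pM2r s0) mul1r; exact: le_trans pw (dot2_le_norm2M _ _).
have p_le1 : norm2 p <= 1.
  have := hp (x + p); rewrite [x + p - x]addrAC subrr add0r [x + p - c]addrAC.
  rewrite -sqr_norm2 -/s.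
  have := norm2D_le (x - c) p; rewrite -/s; nra.
rewrite /unit_circle2 /= -sqr_norm2.
have -> : norm2 p = 1 by apply/le_anti; rewrite p_ge1 p_le1.
by rewrite expr1n.
Qed.

End EuclideanPlane.

Lemma le0_of_le_mulr_lt1 (R : realFieldType) (c C : R) :
  (forall t, 0 < t < 1 -> c <= t * C) -> c <= 0.
Proof.
move=> small; rewrite leNgt; apply/negP => c0.
have den0 : 0 < `|C| + 2 * c by rewrite ltr_wpDl // mulr_gt0.
pose t := c / (`|C| + 2 * c).
have tden : t * (`|C| + 2 * c) = c by rewrite divfK ?gt_eqF.
have t0 : 0 < t by rewrite divr_gt0.
have t1 : t < 1 by have := normr_ge0 C; nra.
have := small t; rewrite t0 t1 => /(_ isT).
have := ler_norm C; nra.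
Qed.

Section MaxAffineDuality.
Variables (R : realType) (K : nat) (d : 'I_K -> R * R) (v : 'I_K -> R).
Implicit Types (lam mu : 'I_K -> R) (x y z : R * R).

Definition comb lam : R * R := \sum_(k < K) lam k *: d k.

Definition simplex lam : Prop := (forall k, 0 <= lam k) /\ \sum_(k < K) lam k = 1.

Definition dual_cost z lam : R :=
  norm2 (z - comb lam) + \sum_(k < K) lam k * v k.

Lemma comb_fst lam : (comb lam).1 = \sum_(k < K) lam k * (d k).1.
Proof. exact: (big_morph fst). Qed.

Lemma comb_snd lam : (comb lam).2 = \sum_(k < K) lam k * (d k).2.
Proof. exact: (big_morph snd). Qed.

Lemma dot2_comb y lam : dot2 y (comb lam) = \sum_(k < K) lam k * dot2 y (d k).
Proof.
rewrite /dot2 comb_fst comb_snd !mulr_sumr -big_split.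
by apply: eq_bigr => k _ /=; ring.
Qed.

Lemma maxaff_ub y k : dot2 y (d k) - v k <= maxaff d v y.
Proof.
apply: sup_upper_bound; last by exists k.
split; first by exists (dot2 y (d k) - v k), k.
exists (\sum_(j < K) `|dot2 y (d j) - v j|) => _ [j _ <-].
rewrite (bigD1 j) //=; apply: le_trans (ler_norm _) _.
by rewrite lerDl sumr_ge0.
Qed.

Lemma maxaff_le (k0 : 'I_K) y r :
  (forall k, dot2 y (d k) - v k <= r) -> maxaff d v y <= r.
Proof.
move=> le_r; apply: ge_sup; first by exists (dot2 y (d k0) - v k0), k0.
by move=> _ [k _ <-].
Qed.

Lemma simplex_mean_le_maxaff lam y :
  simplex lam -> \sum_(k < K) lam k * (dot2 y (d k) - v k) <= maxaff d v y.
Proof.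
case=> lam_ge0 lam_sum1; rewrite -[maxaff _ _ _]mul1r -lam_sum1 mulr_suml.
by apply: ler_sum => k _; apply: ler_wpM2l => //; exact: maxaff_ub.
Qed.

Lemma unit_ball2_0 : unit_ball2 (0 : R * R).
Proof. by rewrite /unit_ball2 /dot2 /= mulr0 addr0 ltr01. Qed.

Lemma lf_term_le_dual_cost z lam y :
  simplex lam -> unit_ball2 y -> dot2 z y - maxaff d v y <= dual_cost z lam.
Proof.
move=> hlam hy; have := simplex_mean_le_maxaff y hlam.
under eq_bigr do rewrite mulrBr; rewrite sumrB -dot2_comb.
have y_le1 : norm2 y <= 1 by apply: norm2_le; rewrite ?ler01 // expr1n ltW.
have := dot2_le_norm2M (z - comb lam) y; have := norm2_ge0 (z - comb lam).
have -> : dot2 (z - comb lam) y = dot2 z y - dot2 y (comb lam).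
  by rewrite /dot2 /=; ring.
rewrite /dual_cost; nra.
Qed.

Lemma lf_dual_le_cost z lam : simplex lam -> lf_dual d v z <= dual_cost z lam.
Proof.
move=> hlam; apply: ge_sup.
  by exists (dot2 z 0 - maxaff d v 0), 0; first exact: unit_ball2_0.
by move=> _ [y hy <-]; exact: lf_term_le_dual_cost.
Qed.

Lemma simplex_delta k : simplex (fun j => (j == k)%:R).
Proof.
split=> [j|]; first by rewrite ler0n.
by rewrite (bigD1 k) //= eqxx big1 ?addr0 // => j /negbTE->.
Qed.

Lemma lf_dual_ub (k0 : 'I_K) z y :
  unit_ball2 y -> dot2 z y - maxaff d v y <= lf_dual d v z.
Proof.
move=> hy; apply: sup_upper_bound; last by exists y.
split; first by exists (dot2 z 0 - maxaff d v 0), 0; first exact: unit_ball2_0.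
exists (dual_cost z (fun j => (j == k0)%:R)) => _ [y' hy' <-].
exact: lf_term_le_dual_cost (simplex_delta k0) hy'.
Qed.

Lemma sum_mix (a : 'I_K -> R) lam k t :
  \sum_(j < K) ((1 - t) * lam j + t * (j == k)%:R) * a j =
  (1 - t) * \sum_(j < K) lam j * a j + t * a k.
Proof.
under eq_bigr do rewrite mulrDl -!mulrA.
rewrite big_split /= -!mulr_sumr; congr (_ + t * _).
by rewrite (bigD1 k) //= eqxx mul1r big1 ?addr0 // => j /negbTE->; rewrite mul0r.
Qed.

Lemma comb_mix lam k t :
  comb (fun j => (1 - t) * lam j + t * (j == k)%:R) =
  ((1 - t) * (comb lam).1 + t * (d k).1, (1 - t) * (comb lam).2 + t * (d k).2).
Proof. by rewrite [LHS]surjective_pairing comb_fst comb_snd !sum_mix comb_fst comb_snd. Qed.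

Lemma simplex_mix lam k t : simplex lam -> 0 <= t -> t <= 1 ->
  simplex (fun j => (1 - t) * lam j + t * (j == k)%:R).
Proof.
case=> lam_ge0 lam_sum1 t0 t1; split=> [j|].
  by rewrite addr_ge0 ?mulr_ge0 ?subr_ge0 ?ler0n.
have := sum_mix (fun=> 1) lam k t; under eq_bigr do rewrite mulr1.
by move=> ->; under eq_bigr do rewrite mulr1; rewrite lam_sum1; ring.
Qed.

Lemma linear_form_continuous (a : 'I_K -> R) :
  continuous (fun l : 'rV[R]_K => \sum_(k < K) l ord0 k * a k).
Proof.
apply: continuous_big; first exact: add_continuous.
by move=> k _ l; apply: continuousM; [exact: coord_continuous | exact: cst_continuous].
Qed.

Lemma simplex_rV_compact : compact [set l : 'rV[R]_K | simplex (fun k => l ord0 k)].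
Proof.
have sum_cont : continuous (fun l : 'rV[R]_K => \sum_(k < K) l ord0 k).
  by apply: continuous_big; [exact: add_continuous | move=> k _; exact: coord_continuous].
apply: (subclosed_compact (B := [set l : 'rV[R]_K | forall k, `[0, 1]%classic (l ord0 k)])).
- have -> : [set l : 'rV[R]_K | simplex (fun k => l ord0 k)] =
      (fun l : 'rV[R]_K => \sum_(k < K) l ord0 k) @^-1` [set 1] `&`
      \bigcap_(k in [set: 'I_K]) ((fun l : 'rV[R]_K => l ord0 k) @^-1` [set t | 0 <= t]).
    apply/seteqP; split=> l /=.
      by case=> l_ge0 l_sum1; split=> // k _; exact: l_ge0.
    by case=> l_sum1 l_ge0; split=> // k; exact: l_ge0.
  apply: closedI; first by move/continuous_closedP: sum_cont; apply; exact: closed_eq.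
  apply: closed_bigI => k _; move/continuous_closedP: (@coord_continuous R 1 K ord0 k).
  by apply; exact: closed_ge.
- have := @rV_compact R K (fun=> `[0, 1]%classic).
  by apply=> k; exact: segment_compact.
- move=> l [l_ge0 l_sum1] k /=; rewrite in_itv /= l_ge0 -l_sum1.
  by rewrite (bigD1 k) //= lerDl sumr_ge0.
Qed.

Lemma dual_cost_rV_continuous x :
  continuous (fun l : 'rV[R]_K => dual_cost x (fun k => l ord0 k)).
Proof.
have affine_cont (c : R) (a : 'I_K -> R) :
    continuous (fun l : 'rV[R]_K => c - \sum_(k < K) l ord0 k * a k).
  by move=> l; apply: continuousB (@linear_form_continuous a l); exact: cst_continuous.
have norm_cont (f g : 'rV[R]_K -> R) : continuous f -> continuous g ->
    continuous (fun l => Num.sqrt (f l * f l + g l * g l)).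
  move=> f_cont g_cont l; apply: continuous_comp; last exact: sqrt_continuous.
  exact: continuousD (continuousM (f_cont l) (f_cont l)) (continuousM (g_cont l) (g_cont l)).
have -> : (fun l : 'rV[R]_K => dual_cost x (fun k => l ord0 k)) = (fun l =>
    Num.sqrt ((x.1 - \sum_(k < K) l ord0 k * (d k).1) * (x.1 - \sum_(k < K) l ord0 k * (d k).1)
            + (x.2 - \sum_(k < K) l ord0 k * (d k).2) * (x.2 - \sum_(k < K) l ord0 k * (d k).2))
    + \sum_(k < K) l ord0 k * v k).
  by apply: funext => l; rewrite /dual_cost /norm2 /dot2 /= comb_fst comb_snd.
move=> l; apply: continuousD (@linear_form_continuous v l).
exact: norm_cont (affine_cont _ _) (affine_cont _ _) l.
Qed.

Lemma dual_cost_min_exists (k0 : 'I_K) x :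
  exists2 lam, simplex lam & forall mu, simplex mu -> dual_cost x lam <= dual_cost x mu.
Proof.
have row_eta (f : 'I_K -> R) : (fun k => (\row_j f j : 'rV[R]_K) ord0 k) = f.
  by apply: funext => k; rewrite mxE.
have nonempty : [set l : 'rV[R]_K | simplex (fun k => l ord0 k)] !=set0.
  by exists (\row_j (j == k0)%:R); rewrite /= row_eta; exact: simplex_delta.
have [l] := EVT_min_rV nonempty simplex_rV_compact
  (continuous_subspaceT (@dual_cost_rV_continuous x)).
rewrite inE => l_simplex l_min; exists (fun k => l ord0 k) => // mu mu_simplex.
by have := l_min (\row_k mu k); rewrite !inE /= !row_eta; apply.
Qed.

Lemma dual_cost_min_first_order x lam k :
  simplex lam -> (forall mu, simplex mu -> dual_cost x lam <= dual_cost x mu) ->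
  dot2 (x - comb lam) (d k - comb lam) <=
    norm2 (x - comb lam) * (v k - \sum_(j < K) lam j * v j).
Proof.
move=> hlam lam_min.
have [->|w0] := eqVneq (x - comb lam) 0.
  by rewrite norm2_0 mul0r /dot2 /= !mul0r addr0.
set w := x - comb lam in w0 *; set b := d k - comb lam.
set s := norm2 w; set P := \sum_(j < K) lam j * v j.
have s0 : 0 < s by exact: norm2_gt0.
rewrite -subr_le0; apply: (@le0_of_le_mulr_lt1 _ _ (dot2 b b)) => t /andP[t0 t1].
(* Compare lam with (1 - t) lam + t e_k; AM-GM linearises the norm around s. *)
have := lam_min _ (simplex_mix k hlam (ltW t0) (ltW t1)).
rewrite /dual_cost sum_mix comb_mix -/P -/s.
set u := (x - _)%R.
have u_sq : dot2 u u = s ^+ 2 - 2 * t * dot2 w b + t ^+ 2 * dot2 b b.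
  by rewrite sqr_norm2 /u /w /b /dot2 /=; ring.
have := norm2_AMGM u s; rewrite u_sq; have := dot2_ge0 b.
nra.
Qed.

Lemma lf_dual_eq_min_cost (k0 : 'I_K) x lam :
  simplex lam -> (forall mu, simplex mu -> dual_cost x lam <= dual_cost x mu) ->
  x != comb lam -> lf_dual d v x = dual_cost x lam.
Proof.
move=> hlam lam_min xc; apply/le_anti; rewrite lf_dual_le_cost //=.
set w := x - comb lam; set s := norm2 w.
set P := \sum_(j < K) lam j * v j; set M := \sum_(j < K) `|v j|.
have s0 : 0 < s by rewrite norm2_gt0 // subr_eq0.
rewrite /dual_cost -/w -/s -/P -subr_le0.
apply: (@le0_of_le_mulr_lt1 _ _ (s + P + M)) => t /andP[t0 t1].
pose q := (1 - t) / s; have qs : q * s = 1 - t by rewrite divfK ?gt_eqF.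
have q0 : 0 <= q by rewrite divr_ge0 ?subr_ge0 ?ltW.
pose y := (q * w.1, q * w.2).
have w_sq : dot2 w w = s ^+ 2 by rewrite sqr_norm2.
have y_ball : unit_ball2 y.
  rewrite /unit_ball2 /= /dot2 /=.
  have -> : q * w.1 * (q * w.1) + q * w.2 * (q * w.2) = (q * s) ^+ 2.
    by rewrite exprMn -w_sq /dot2; ring.
  by rewrite qs; nra.
have y_maxaff : maxaff d v y <= q * dot2 w (comb lam) - (1 - t) * P + t * M.
  apply: (maxaff_le k0) => k.
  have := dual_cost_min_first_order k hlam lam_min; rewrite -/w -/s -/P.
  have vk_le : - v k <= M.
    by rewrite /M (bigD1 k) //= -normrN (le_trans (ler_norm _)) // lerDl sumr_ge0.
  have -> : dot2 y (d k) = q * (dot2 w (comb lam) + dot2 w (d k - comb lam)).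
    by rewrite /dot2 /=; ring.
  nra.
have := lf_dual_ub k0 x y_ball.
have -> : dot2 x y = q * (dot2 w w + dot2 w (comb lam)) by rewrite /w /dot2 /=; ring.
rewrite w_sq; nra.
Qed.

End MaxAffineDuality.

Theorem lemma2p6 (R : realType) (K : nat) (hK : (1 <= K)%N)
  (d : 'I_K -> R * R) (alpha : 'I_K -> R) (halpha : forall k, 0 < alpha k)
  (hsum : \sum_(k < K) alpha k = pi)
  (v : 'I_K -> R) (hpog : pogorelov d alpha v)
  (x : R * R) (hx : ~ conv_hull d x) :
  subgrad (lf_dual d v) x `<=` (@unit_circle2 R).
Proof.
pose k0 : 'I_K := Ordinal hK.
have [lam hlam lam_min] := dual_cost_min_exists d v k0 x.
have xc : x != comb d lam by apply/eqP => xc; apply: hx; exists lam; case: hlam.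
have dual_le z : lf_dual d v z <= dual_cost d v z lam by exact: lf_dual_le_cost.
move=> p /(subgrad_majorant dual_le (lf_dual_eq_min_cost k0 hlam lam_min xc)).
exact: subgrad_norm2_subr xc p.
Qed.
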